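(* Let $G$ be a graph. If $G$ has a pan cycle $C$, then $\mathsf{pn}(G)=\mathsf{pn}(G-C)+1$, where $G-C$ denotes the graph obtained from $G$ by deleting all edges of $C$.
   Context: All graphs are finite, simple and undirected. A path partition of $G$ is a collection of pairwise edge-disjoint paths in $G$ whose edge sets together cover $E(G)$; $\mathsf{pn}(G)$ is the minimum size of a path partition. A pan cycle of $G$ is a cycle $C$ in $G$ containing a unique vertex $v$ with $\deg_G(v)=3$, while every other vertex $w$ of $C$ has $\deg_G(w)=2$. *)

From mathcomp Require Import all_boot.
From Stdlib Require Import ClassicalEpsilon.
Set Implicit Arguments. Unset Strict Implicit. Unset Printing Implicit Defensive.

(* A finite simple graph on vertex set T is given by its edge set
   E : {set {set T}}, every edge being a 2-element subset of T. *)

Definition simple_edges (T : finType) (E : {set {set T}}) : Prop :=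
  forall e, e \in E -> #|e| = 2.

Definition deg (T : finType) (E : {set {set T}}) (v : T) : nat :=
  #|[set e in E | v \in e]|.

Definition pedge (T : finType) (p : T * T) : {set T} := [set p.1; p.2].

Definition path_edges (T : finType) (s : seq T) : {set {set T}} :=
  [set pedge p | p in zip s (behead s)].

Definition is_gpath (T : finType) (E : {set {set T}}) (s : seq T) : bool :=
  [&& uniq s, 1 < size s & all (fun p => pedge p \in E) (zip s (behead s))].

Definition path_partition (T : finType) (E : {set {set T}}) (P : seq (seq T)) : Prop :=
  [/\ all (is_gpath E) P,
      (forall i j, i < size P -> j < size P -> i != j ->
         [disjoint path_edges (nth [::] P i) & path_edges (nth [::] P j)])
    & \bigcup_(s <- P) path_edges s = E].

Definition has_pp_of_size (T : finType) (E : {set {set T}}) (n : nat) : bool :=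
  if excluded_middle_informative (exists P, path_partition E P /\ size P = n)
  then true else false.

(* pn(G): the least size of a path partition (one always exists with at most
   #|E| paths, namely single edges, so the search bound is harmless). *)
Definition pn (T : finType) (E : {set {set T}}) : nat :=
  find (has_pp_of_size E) (iota 0 #|E|.+1).

Definition cycle_edges (T : finType) (c : seq T) : {set {set T}} :=
  [set pedge p | p in zip c (rot 1 c)].

Definition is_gcycle (T : finType) (E : {set {set T}}) (c : seq T) : bool :=
  [&& uniq c, 2 < size c & all (fun p => pedge p \in E) (zip c (rot 1 c))].

Definition pan_cycle (T : finType) (E : {set {set T}}) (c : seq T) : Prop :=
  is_gcycle E c /\
  exists v, [/\ v \in c, deg E v = 3 &
                forall w, w \in c -> w != v -> deg E w = 2].

(* Write the pan cycle as v :: r, with v its vertex of degree 3.  Every vertex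
   of r has degree 2, so all its edges are cycle edges, and v has exactly one
   edge e0 off the cycle C.  Given a path partition of G - C, the path through
   e0 ends at v; continuing it around the cycle and adding the closing edge as
   a new path gives a path partition of G with one more path.  Conversely,
   deleting the vertices of r from the paths of a partition of G gives a
   partition of G - C once the paths reduced to a single vertex are dropped,
   and at least one path is dropped: otherwise every path using a cycle edge
   would also use e0, so a single path would contain the whole cycle. *)

From mathcomp Require Import all_boot zify.
From Stdlib Require Import ClassicalEpsilon.
Set Implicit Arguments. Unset Strict Implicit. Unset Printing Implicit Defensive.

Local Notation pairs s := (zip s (behead s)).

Section ConsecutivePairs.
Variable T : eqType.
Implicit Types (x y : T) (s t : seq T).

Lemma pairsP x y s :
  reflect (exists p q, s = p ++ [:: x, y & q]) ((x, y) \in pairs s).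
Proof.
apply: (iffP idP); last first.
  by case=> p [q ->]; elim: p => [|z [|z' p] IH] /=; rewrite inE ?eqxx // IH orbT.
elim: s => [|z [|z' s] IH] //=; rewrite inE => /orP[/eqP[-> ->]|/IH[p [q ->]]].
  by exists [::], s.
by exists (z :: p), q.
Qed.

Lemma mem_pairs x y s : (x, y) \in pairs s -> x \in s /\ y \in s.
Proof. by case/pairsP=> p [q ->]; rewrite !mem_cat !inE !eqxx !orbT. Qed.

Lemma pairs_rev x y s : (x, y) \in pairs s -> (y, x) \in pairs (rev s).
Proof.
case/pairsP=> p [q ->]; apply/pairsP; exists (rev q), (rev p).
by rewrite rev_cat !rev_cons -!cats1 -!catA.
Qed.

Lemma pairs_neq x y s : uniq s -> (x, y) \in pairs s -> x != y.
Proof.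
move=> us /pairsP[p [q sE]]; move: us; rewrite sE cat_uniq /= inE.
by case/and3P=> _ _ /andP[/norP[]].
Qed.

Lemma pairs_cat x s t :
  pairs ((x :: s) ++ t) = pairs (x :: s) ++ pairs (last x s :: t).
Proof. by elim: s x => [|y s IH] x //=; rewrite IH. Qed.

Lemma pairs_interior x s : uniq s -> x \in s -> x != head x s -> x != last x s ->
  exists y z, [/\ (y, x) \in pairs s, (x, z) \in pairs s & y != z].
Proof.
move=> us /splitPr sE; case: sE us => p q.
case/lastP: p => [|p y] us; first by rewrite eqxx.
case: q us => [|z q]; first by rewrite cat_rcons last_cat eqxx.
rewrite cat_rcons => us _ _; exists y, z; split.
- by apply/pairsP; exists p, (z :: q).
- by apply/pairsP; exists (rcons p y), q; rewrite cat_rcons.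
- by move: us; rewrite cat_uniq /= !inE => /and3P[_ _ /andP[/norP[_ /norP[]]]].
Qed.

Lemma pairs_cover x s : x \in s -> 1 < size s ->
  exists2 p, p \in pairs s & (x == p.1) || (x == p.2).
Proof.
elim: s => [|y [|z s] IH] //= + _; rewrite inE => /orP[/eqP->|xzs].
  by exists (y, z); rewrite ?inE ?eqxx.
case: s IH xzs => [|w s] IH xzs.
  by exists (y, z); rewrite ?inE ?eqxx //; move: xzs; rewrite inE => ->; rewrite orbT.
by have [p ps xp] := IH xzs isT; exists p; rewrite // inE ps orbT.
Qed.

Lemma pairs_mixed (a : pred T) s : has a s -> has (predC a) s ->
  exists2 p, p \in pairs s & a p.1 != a p.2.
Proof.
elim: s => [|x [|y s] IH] //=; first by rewrite !orbF => ->.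
have [axy | nxy] := eqVneq (a x) (a y); last by exists (x, y); rewrite ?inE ?eqxx.
rewrite axy !orbA !orbb => ha hna.
by have [p ps hp] := IH ha hna; exists p; rewrite // inE ps orbT.
Qed.

Lemma count_pairs_inside (a : pred T) s :
  count (fun p => a p.1 && a p.2) (pairs s) <= (count a s).-1.
Proof.
elim: s => [|x [|y s] IH] //=.
by move: IH => /=; case: (a x) (a y) => [] [] /=; lia.
Qed.

Section ClosedSet.
Variables (adj : rel T) (a : pred T) (v : T).
Hypothesis adj_sym : symmetric adj.
Hypothesis a_closed : forall x y, adj x y -> a x -> y = v \/ a y.

Lemma closed_path_all x s : a x -> v \notin x :: s ->
  all (fun p => adj p.1 p.2) (pairs (x :: s)) -> all a (x :: s).
Proof.
elim: s x => [|y s IH] x /=; first by rewrite andbT.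
move=> ax; rewrite inE => /norP[_ vys] /andP[axy adj_s]; rewrite ax /=.
have [yv | ay] := a_closed axy ax; first by rewrite yv inE eqxx in vys.
exact: IH.
Qed.

(* The a-vertices of s can only be left through v, which s visits once, so
   they form an end segment of s. *)
Lemma pairs_filter s : uniq s -> all (fun p => adj p.1 p.2) (pairs s) ->
  pairs [seq x <- s | ~~ a x] = [seq p <- pairs s | ~~ a p.1 && ~~ a p.2].
Proof.
elim: s => [|x [|y s] IH] //=; first by case: (a x).
case/andP=> xys uys /andP[axy adj_s]; have {IH} := IH uys adj_s.
case: (boolP (a x)) => ax /=; first by [].
case: (boolP (a y)) => ay /=; last by move=> <-.
have xv : x = v.
  by rewrite adj_sym in axy; have [//|ax'] := a_closed axy ay; rewrite ax' in ax.
have /andP[_ /allP as_] : all a (y :: s) by apply: closed_path_all; rewrite -?xv.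
rewrite (eq_in_filter (a2 := pred0)) ?filter_pred0 //.
by move=> z /as_ ->.
Qed.

End ClosedSet.
End ConsecutivePairs.

Section Paths.
Variable T : finType.
Implicit Types (x y : T) (s t : seq T) (E F : {set {set T}}).

Lemma in_pedge x (p : T * T) : (x \in pedge p) = (x == p.1) || (x == p.2).
Proof. exact: in_set2. Qed.

Lemma pedgeC x y : pedge (x, y) = pedge (y, x).
Proof. exact: setUC. Qed.

Lemma pedge_in_path_edges p s : p \in pairs s -> pedge p \in path_edges s.
Proof. exact: imset_f. Qed.

Lemma path_edges1 x : path_edges [:: x] = set0.
Proof. by apply/setP=> e; rewrite inE; apply/imsetP; case. Qed.

Lemma path_edges_cons2 x y s :
  path_edges [:: x, y & s] = pedge (x, y) |: path_edges (y :: s).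
Proof.
apply/setP=> e; rewrite in_setU1; apply/imsetP/predU1P.
  by case=> p; rewrite inE => /predU1P[-> | ps ->]; [left | right; apply: imset_f].
by case=> [-> | /imsetP[p ps ->]]; [exists (x, y) | exists p];
  rewrite ?inE ?eqxx ?ps ?orbT.
Qed.

Lemma path_edges_vert x e s : e \in path_edges s -> x \in e -> x \in s.
Proof.
case/imsetP=> -[y z] /mem_pairs[ys zs] ->.
by rewrite in_pedge => /orP[] /eqP ->.
Qed.

Lemma path_edges_rev s : path_edges (rev s) = path_edges s.
Proof.
suff sub t : path_edges (rev t) \subset path_edges t.
  by apply/eqP; rewrite eqEsubset sub -{1}(revK s) sub.
apply/subsetP=> e /imsetP[[x y] /pairs_rev]; rewrite revK pedgeC => yx ->.
exact: pedge_in_path_edges.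
Qed.

Lemma path_edges_cat x s t :
  path_edges ((x :: s) ++ t) = path_edges (x :: s) :|: path_edges (last x s :: t).
Proof.
apply/setP=> e; rewrite /path_edges pairs_cat inE.
apply/imsetP/orP => [[p] | [] /imsetP[p ps ->]]; rewrite ?mem_cat.
  by case/orP=> ps ->; [left | right]; apply: imset_f.
all: by exists p; rewrite // mem_cat ps ?orbT.
Qed.

Lemma gpath_sub E s : is_gpath E s -> path_edges s \subset E.
Proof. by case/and3P=> _ _ /allP sE; apply/subsetP=> e /imsetP[p /sE + ->]. Qed.

Lemma gpathP E s :
  reflect [/\ uniq s, 1 < size s & path_edges s \subset E] (is_gpath E s).
Proof.
apply: (iffP idP) => [gs | [us s2 sE]].
  by case/and3P: (gs) => -> -> _; split=> //; exact: gpath_sub.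
by rewrite /is_gpath us s2; apply/allP=> p /pedge_in_path_edges/(subsetP sE).
Qed.

Lemma gpath_subset E F s : E \subset F -> is_gpath E s -> is_gpath F s.
Proof.
by move=> EF /gpathP[us s2 sE]; apply/gpathP; split=> //; apply: subset_trans EF.
Qed.

Lemma gpath_rev E s : is_gpath E s -> is_gpath E (rev s).
Proof.
by case/gpathP=> us s2 sE; apply/gpathP; rewrite rev_uniq size_rev path_edges_rev.
Qed.

Lemma gpath_cat E x s t : is_gpath E (x :: s) -> is_gpath E (last x s :: t) ->
  ~~ has (mem (x :: s)) t -> is_gpath E ((x :: s) ++ t).
Proof.
case/gpathP=> us s2 sE /gpathP[]; rewrite cons_uniq => /andP[_ ut] _ tE st.
apply/gpathP; split.
- by rewrite cat_uniq us st ut.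
- by rewrite size_cat (leq_trans s2) ?leq_addr.
- by rewrite path_edges_cat subUset sE tE.
Qed.

Lemma gpath_edge_at E x s : is_gpath E s -> x \in s ->
  exists2 e, e \in path_edges s & x \in e.
Proof.
case/gpathP=> _ s2 _ xs; have [p ps xp] := pairs_cover xs s2.
by exists (pedge p); rewrite ?pedge_in_path_edges ?in_pedge.
Qed.

Lemma gpath_deg1_end E x s : is_gpath E s -> x \in s -> deg E x <= 1 ->
  x = head x s \/ x = last x s.
Proof.
case/gpathP=> us _ sE xs dx.
have [xh | xh] := eqVneq x (head x s); first by left.
have [xl | xl] := eqVneq x (last x s); first by right.
have [y [z [yx xz yz]]] := pairs_interior us xs xh xl.
have edge_at p : p \in pairs s -> x \in pedge p -> pedge p \in [set e in E | x \in e].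
  by move=> ps xp; rewrite inE xp (subsetP sE) ?pedge_in_path_edges.
have /subset_leq_card : [set pedge (y, x); pedge (x, z)] \subset [set e in E | x \in e].
  by apply/subsetP=> e /set2P[] ->; apply: edge_at; rewrite ?in_pedge ?eqxx ?orbT.
rewrite cards2 => /leq_trans/(_ dx); case: eqVneq => // /setP/(_ z).
rewrite !in_pedge /= eqxx orbT => /orP[] /eqP zE.
  by rewrite zE eqxx in yz.
by have := pairs_neq us xz; rewrite zE eqxx.
Qed.

Lemma gpath_ending_at E x s : is_gpath E s -> x \in s -> deg E x <= 1 ->
  exists t, [/\ is_gpath E t, path_edges t = path_edges s & last x t = x].
Proof.
move=> gs xs dx; have [xh | xl] := gpath_deg1_end gs xs dx; last by exists s.
exists (rev s); rewrite gpath_rev // path_edges_rev; split=> //.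
by case: s xh {gs xs} => [|a w] //= ->; rewrite rev_cons last_rcons.
Qed.

Lemma deg_setD E F x : F \subset E -> deg (E :\: F) x = deg E x - deg F x.
Proof.
move=> FE; rewrite /deg.
have -> : [set e in F | x \in e] = [set e in E | x \in e] :&: F.
  apply/setP=> e; rewrite !inE andbC.
  by case: (boolP (e \in F)) => eF; rewrite ?andbF // (subsetP FE).
rewrite -(cardsID F [set e in E | x \in e]) addKn.
by apply: eq_card => e; rewrite !inE andbA.
Qed.

End Paths.

Lemma zip_rot (T1 T2 : Type) n (s : seq T1) (t : seq T2) :
  size s = size t -> zip (rot n s) (rot n t) = rot n (zip s t).
Proof.
move=> st; have szip : size (zip s t) = size s by rewrite size_zip st minnn.
have [sn | ] := leqP (size s) n; first by rewrite !rot_oversize -?st ?szip.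
elim: n => [|n IH] /ltnW ns; first by rewrite !rot0.
rewrite (rotS ns) (rotS (_ : n < size t)) -?st //.
rewrite (rotS (_ : n < size (zip s t))) ?szip // -IH //.
have : size (rot n s) = size (rot n t) by rewrite !size_rot.
by case: (rot n s) (rot n t) => [|x s'] [|y t'] //= [eq_sz]; rewrite !rot1_cons zip_rcons.
Qed.

Section CycleEdges.
Variable T : finType.
Implicit Types (x y : T) (s c : seq T) (E : {set {set T}}).

Lemma cycle_edges_rot n c : cycle_edges (rot n c) = cycle_edges c.
Proof.
rewrite /cycle_edges rot_rot zip_rot ?size_rot //.
apply/setP=> e; apply/imsetP/imsetP=> -[p].
  by rewrite mem_rot => ps ->; exists p.
by rewrite -(mem_rot n) => ps ->; exists p.
Qed.

Lemma cycle_edges_cons x s :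
  cycle_edges (x :: s) = pedge (last x s, x) |: path_edges (x :: s).
Proof.
rewrite /cycle_edges.
have -> : zip (x :: s) (rot 1 (x :: s)) = rcons (pairs (x :: s)) (last x s, x).
  by rewrite rot1_cons; elim: s {1 3 4 5}x => //= y s IH z; rewrite IH.
apply/setP=> e; rewrite in_setU1; apply/imsetP/predU1P.
  case=> p; rewrite mem_rcons inE => /predU1P[-> | ps ->]; first by left.
  by right; apply: imset_f.
by case=> [-> | /imsetP[p ps ->]]; [exists (last x s, x) | exists p];
  rewrite ?mem_rcons ?inE ?eqxx ?ps ?orbT.
Qed.

Lemma cycle_edges_vert x e c : e \in cycle_edges c -> x \in e -> x \in c.
Proof.
case: c => [|y s]; first by case/imsetP.
rewrite cycle_edges_cons => /setU1P[-> | es]; last exact: path_edges_vert es.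
by rewrite in_pedge => /orP[] /eqP -> /=; rewrite ?mem_last ?inE ?eqxx.
Qed.

Lemma card_path_edges x s : uniq (x :: s) -> #|path_edges (x :: s)| = size s.
Proof.
elim: s x => [|y s IH] x; first by rewrite path_edges1 cards0.
rewrite cons_uniq => /andP[xys uys]; rewrite path_edges_cons2 cardsU1 IH //.
suff /negPf -> : pedge (x, y) \notin path_edges (y :: s) by [].
by apply: contra xys => /path_edges_vert; apply; rewrite in_pedge eqxx.
Qed.

Lemma head_neq_last x s : uniq s -> 1 < size s -> head x s != last x s.
Proof.
case: s => [|y [|z s]] //= /andP[yzs _] _.
by apply: contraNneq yzs => ->; apply: mem_last.
Qed.

Section CycleAtHead.
Variables (x : T) (s : seq T).
Hypotheses (uxs : uniq (x :: s)) (s2 : 1 < size s).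

Let xs : x \notin s. Proof. by case/andP: uxs. Qed.

Lemma path_edges_cons_head :
  path_edges (x :: s) = pedge (x, head x s) |: path_edges s.
Proof. by case: s s2 => [|y t] // _; rewrite path_edges_cons2. Qed.

Lemma cycle_edges_head_neq : pedge (x, head x s) != pedge (last x s, x).
Proof.
apply/negP=> /eqP/setP/(_ (last x s)); rewrite !in_pedge /= eqxx /=.
case/orP=> /eqP lE.
  by move: xs; rewrite -lE; case: s s2 => [|y t] //= _; rewrite mem_last.
by move: (head_neq_last x (proj2 (andP uxs)) s2); rewrite lE eqxx.
Qed.

Lemma notin_path_edges_tail e : e \in path_edges s -> x \notin e.
Proof. by move=> es; apply: contra xs; apply: path_edges_vert. Qed.

Lemma closing_edge_notin_path_edges :
  pedge (last x s, x) \notin path_edges (x :: s).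
Proof.
rewrite path_edges_cons_head in_setU1 eq_sym (negPf cycle_edges_head_neq) /=.
by apply/negP=> /notin_path_edges_tail; rewrite in_pedge eqxx orbT.
Qed.

Lemma card_cycle_edges_cons : #|cycle_edges (x :: s)| = (size s).+1.
Proof.
by rewrite cycle_edges_cons cardsU1 closing_edge_notin_path_edges card_path_edges.
Qed.

Lemma deg_cycle_edges_head : deg (cycle_edges (x :: s)) x = 2.
Proof.
rewrite /deg (_ : [set e in _ | _] = [set pedge (x, head x s); pedge (last x s, x)]).
  by rewrite cards2 cycle_edges_head_neq.
have xea : x \in pedge (x, head x s) by rewrite in_pedge eqxx.
have xeb : x \in pedge (last x s, x) by rewrite in_pedge eqxx orbT.
apply/setP=> e; rewrite !inE cycle_edges_cons path_edges_cons_head !in_setU1.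
have [/notin_path_edges_tail xe | _] := boolP (e \in path_edges s).
  by rewrite (negPf xe) andbF; apply/esym/norP; split; apply: contraNneq xe => ->.
by rewrite orbF orbC; apply/andb_idr => /orP[] /eqP ->.
Qed.

End CycleAtHead.

Lemma deg_cycle_edges x c : uniq c -> 2 < size c -> x \in c ->
  deg (cycle_edges c) x = 2.
Proof.
move=> uc c3 /rot_index xE; rewrite -(cycle_edges_rot (index x c)) xE.
apply: deg_cycle_edges_head; first by rewrite -xE rot_uniq.
by move: c3; rewrite -(size_rot (index x c)) xE.
Qed.

End CycleEdges.

Section Acyclic.
Variable T : finType.
Implicit Types (s c : seq T).

(* A path has at most k - 1 edges joining k of its vertices; a k-cycle has k. *)
Lemma cycle_edges_not_subset_path c s : uniq c -> 2 < size c -> uniq s ->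
  ~~ (cycle_edges c \subset path_edges s).
Proof.
move=> uc c3 us; apply/negP=> sub.
have cardC : #|cycle_edges c| = size c.
  by case: c uc c3 {sub} => [|x w] // uc c3; rewrite card_cycle_edges_cons.
have inside : #|cycle_edges c| <= count (fun p => (p.1 \in c) && (p.2 \in c)) (pairs s).
  rewrite -size_filter -(size_map (@pedge T)); apply: (leq_trans _ (card_size _)).
  apply/subset_leq_card/subsetP=> e eC; have /imsetP[p ps eE] := subsetP sub e eC.
  apply/mapP; exists p => //; rewrite mem_filter ps andbT.
  rewrite eE in eC; apply/andP; split; apply/(cycle_edges_vert eC);
  by rewrite in_pedge eqxx ?orbT.
have /leq_trans/(_ (count_pairs_inside _ s)) := inside.
have : count (mem c) s <= size c.
  rewrite -size_filter uniq_leq_size ?filter_uniq // => x.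
  by rewrite mem_filter => /andP[].
by rewrite cardC; case: (size c) c3 => // n _; case: (count _ s) => //= m; lia.
Qed.

End Acyclic.

Lemma bigcup_seqP (I : eqType) (U : finType) (P : seq I) (F : I -> {set U}) x :
  reflect (exists2 i, i \in P & x \in F i) (x \in \bigcup_(i <- P) F i).
Proof.
elim: P => [|i P IH]; rewrite ?big_nil ?big_cons ?inE; first by right; case.
apply: (iffP orP) => [[xi | /IH[j jP xj]] | [j]].
- by exists i; rewrite ?inE ?eqxx.
- by exists j; rewrite ?inE ?jP ?orbT.
by rewrite inE => /predU1P[-> | jP] xj; [left | right; apply/IH; exists j].
Qed.

Section PathPartitions.
Variable T : finType.
Implicit Types (s t : seq T) (E D : {set {set T}}) (P Q : seq (seq T)).

Definition edge_disjoint : rel (seq T) :=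
  fun s t => [disjoint path_edges s & path_edges t].

Lemma path_partitionP E P : path_partition E P <->
  [/\ all (is_gpath E) P, pairwise edge_disjoint P & \bigcup_(s <- P) path_edges s = E].
Proof.
split=> [[gP dP uP] | [gP /(pairwiseP [::]) dP uP]].
  by split=> //; apply/(pairwiseP [::]) => i j ip jp ij; apply: dP; rewrite // neq_ltn ij.
split=> // i j ip jp; rewrite neq_ltn => /orP[] ij; first exact: dP.
by rewrite disjoint_sym; apply: dP.
Qed.

Lemma path_partition_edge_path E P s t e : path_partition E P -> s \in P -> t \in P ->
  e \in path_edges s -> e \in path_edges t -> s = t.
Proof.
case=> _ dP _ sP tP es et; apply/eqP/negPn/negP => st.
have ij : index s P != index t P.
  by apply: contra st => /eqP/(congr1 (nth [::] P)); rewrite !nth_index // => ->.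
have := dP _ _ _ _ ij; rewrite !index_mem !nth_index // => /(_ sP tP).
by move/disjointFr/(_ es); rewrite et.
Qed.

Lemma gpath_edges_neq0 E s : is_gpath E s -> path_edges s != set0.
Proof.
case/gpathP=> _ + _; case: s => [|x [|y s]] // _.
by apply/set0Pn; exists (pedge (x, y)); rewrite path_edges_cons2 setU11.
Qed.

Lemma size_path_partition E P : path_partition E P -> size P <= #|E|.
Proof.
case/path_partitionP=> gP + <-.
have : all (fun s => path_edges s != set0) P.
  by apply/allP=> s /(allP gP)/gpath_edges_neq0.
elim: P {gP} => [|s P IH] //=; rewrite big_cons => /andP[s0 P0] /andP[ds dP].
have sP : [disjoint path_edges s & \bigcup_(t <- P) path_edges t].
  rewrite -setI_eq0; apply/set0Pn=> -[e]; rewrite inE => /andP[es /bigcup_seqP[t tP et]].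
  by have := allP ds t tP; move/disjointFr/(_ es); rewrite et.
rewrite cardsU (disjoint_setI0 sP) cards0 subn0.
by rewrite -add1n leq_add ?IH // card_gt0.
Qed.

Lemma has_pp_of_sizeP E n :
  reflect (exists P, path_partition E P /\ size P = n) (has_pp_of_size E n).
Proof. by rewrite /has_pp_of_size; case: excluded_middle_informative; constructor. Qed.

Lemma pn_min E P : path_partition E P -> pn E <= size P.
Proof.
move=> pP; rewrite /pn leqNgt; apply/negP => lt.
have := before_find 0 lt; rewrite nth_iota ?ltnS ?size_path_partition // add0n.
by move/has_pp_of_sizeP; apply; exists P.
Qed.

Lemma path_partition_single_edges E : simple_edges E ->
  path_partition E [seq enum e | e : {set T} <- enum E].
Proof.
move=> sE; have single e : e \in E -> path_edges (enum e) = [set e].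
  move/sE; rewrite cardE; case eE: (enum e) => [|x [|y [|z w]]] // _.
  rewrite path_edges_cons2 path_edges1 setU0; congr [set _].
  by apply/setP=> z; rewrite in_pedge -mem_enum eE !inE.
apply/path_partitionP; split.
- apply/allP=> _ /mapP[e eE ->]; rewrite mem_enum in eE.
  by apply/gpathP; rewrite enum_uniq -cardE sE // single // sub1set.
- rewrite pairwise_map; have := enum_uniq (mem E); rewrite uniq_pairwise.
  apply: (@sub_in_pairwise _ (mem (enum E))); last exact: allss.
  move=> e f; rewrite !mem_enum => eE fE ef /=.
  by rewrite /edge_disjoint !single // disjoints1 in_set1; exact: ef.
- apply/setP=> e; apply/bigcup_seqP/idP => [[_ /mapP[f fE ->]] | eE].
    by rewrite mem_enum in fE; rewrite single // inE => /eqP ->.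
  by exists (enum e); [apply: map_f; rewrite mem_enum | rewrite single ?inE].
Qed.

Lemma pn_exists E : simple_edges E -> exists2 P, path_partition E P & size P = pn E.
Proof.
move=> sE; have hasE : has (has_pp_of_size E) (iota 0 #|E|.+1).
  apply/hasP; exists #|E|; first by rewrite mem_iota ltnS leqnn.
  apply/has_pp_of_sizeP; exists [seq enum e | e : {set T} <- enum E].
  by rewrite size_map cardE; split=> //; apply: path_partition_single_edges.
have := nth_find 0 hasE; rewrite has_find size_iota in hasE.
by rewrite nth_iota // add0n => /has_pp_of_sizeP[P [pP sP]]; exists P.
Qed.

Lemma path_partition_filter E D Q (a : pred T) : path_partition E Q ->
  {in Q, forall s, path_edges (filter a s) = path_edges s :\: D} ->
  path_partition (E :\: D) [seq t <- map (filter a) Q | 1 < size t].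
Proof.
move=> /path_partitionP[gQ dQ uQ] aQ; apply/path_partitionP; split.
- apply/allP=> t; rewrite mem_filter => /andP[t2 /mapP[s sQ tE]]; subst t.
  have /gpathP[us _ sE] := allP gQ s sQ.
  apply/gpathP; split; rewrite ?filter_uniq // aQ //.
  by apply/subsetP=> e; rewrite !inE => /andP[-> /(subsetP sE)].
- apply: pairwise_filter; rewrite pairwise_map.
  apply: (@sub_in_pairwise _ (mem Q) _ _ _ _ (allss Q) dQ) => s t sQ tQ /=.
  rewrite /edge_disjoint !aQ // => st.
  exact: disjointWl (subsetDl _ _) (disjointWr (subsetDl _ _) st).
- apply/setP=> e; apply/bigcup_seqP/idP => [[t] | ].
    rewrite mem_filter => /andP[_ /mapP[s sQ ->]]; rewrite aQ // !inE => /andP[-> es].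
    by rewrite -uQ; apply/bigcup_seqP; exists s.
  rewrite inE -uQ => /andP[eD /bigcup_seqP[s sQ es]].
  have eas : e \in path_edges (filter a s) by rewrite aQ // inE eD.
  exists (filter a s) => //; rewrite mem_filter map_f // andbT.
  by case/imsetP: eas; case: (filter a s) => [|x [|y w]].
Qed.

Lemma path_partition_splice E D Q1 s Q2 A B :
  path_partition E (Q1 ++ s :: Q2) -> [disjoint D & E] ->
  is_gpath (D :|: E) A -> is_gpath (D :|: E) B -> edge_disjoint A B ->
  path_edges A :|: path_edges B = D :|: path_edges s ->
  path_partition (D :|: E) (A :: B :: Q1 ++ Q2).
Proof.
move=> /path_partitionP[gQ dQ uQ] DE gA gB dAB eAB.
have rest t : t \in Q1 ++ Q2 -> t \in Q1 ++ s :: Q2.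
  by rewrite !mem_cat inE => /orP[] ->; rewrite ?orbT.
have tE t : t \in Q1 ++ Q2 -> path_edges t \subset E.
  by move/rest => tQ; rewrite -uQ; apply/subsetP=> e et; apply/bigcup_seqP; exists t.
have st t : t \in Q1 ++ Q2 -> edge_disjoint s t.
  move: dQ; rewrite pairwise_cat pairwise_cons allrel_consr.
  case/and3P=> /andP[ds _] _ /andP[sQ2 _]; rewrite mem_cat => /orP[tQ | tQ].
    by rewrite /edge_disjoint disjoint_sym; apply: (allP ds).
  exact: (allP sQ2).
have AB_rest t : t \in Q1 ++ Q2 -> edge_disjoint A t && edge_disjoint B t.
  move=> tQ; rewrite /edge_disjoint -!setI_eq0 -!subset0 -subUset -setIUl eAB setIUl.
  rewrite subUset !subset0 !setI_eq0 (disjointWr (tE t tQ) DE).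
  exact: st.
apply/path_partitionP; split.
- rewrite /= gA gB /=; apply/allP=> t tQ; apply: gpath_subset (subsetUr D E) _.
  exact: (allP gQ _ (rest t tQ)).
- rewrite /= dAB /=; apply/and3P; split.
  + by apply/allP=> t /AB_rest/andP[].
  + by apply/allP=> t /AB_rest/andP[].
  + move: dQ; rewrite !pairwise_cat pairwise_cons allrel_consr.
    by case/and3P=> /andP[_ ->] -> /andP[_ ->].
- rewrite !big_cons setUA eAB -setUA; congr (_ :|: _).
  by rewrite -uQ !big_cat big_cons /= setUCA.
Qed.

End PathPartitions.

Section PanCycle.
Variables (T : finType) (E : {set {set T}}) (v : T) (r : seq T).
Hypotheses (sE : simple_edges E) (uvr : uniq (v :: r)) (r2 : 1 < size r).
Hypothesis CE : cycle_edges (v :: r) \subset E.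
Hypotheses (deg_v : deg E v = 3) (deg_r : forall x, x \in r -> deg E x = 2).

Local Notation C := (cycle_edges (v :: r)).
Local Notation drop_r s := [seq x <- s | x \notin r].

Let vr : v \notin r. Proof. by case/andP: uvr. Qed.
Let c3 : 2 < size (v :: r). Proof. exact: r2. Qed.
Let closing_edge_in_cycle : pedge (last v r, v) \in C.
Proof. by rewrite cycle_edges_cons setU11. Qed.

Lemma deg_off_cycle_r x : x \in r -> deg (E :\: C) x = 0.
Proof. by move=> xr; rewrite deg_setD // deg_r // deg_cycle_edges // inE xr orbT. Qed.

Lemma deg_off_cycle_v : deg (E :\: C) v = 1.
Proof. by rewrite deg_setD // deg_v deg_cycle_edges // inE eqxx. Qed.

Lemma edge_at_r_in_cycle x e : x \in r -> e \in E -> x \in e -> e \in C.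
Proof.
move=> xr eE xe; apply: contraT => eC; move/eqP: (deg_off_cycle_r xr).
by rewrite cards_eq0 => /eqP/setP/(_ e); rewrite !inE eC eE xe.
Qed.

Lemma off_cycle_edge_at_v_unique e f :
  e \in E :\: C -> f \in E :\: C -> v \in e -> v \in f -> e = f.
Proof.
have /eqP/cards1P[e0 E0] := deg_off_cycle_v => eE fE ve vf.
have: e \in [set e in E :\: C | v \in e] by rewrite inE eE ve.
have: f \in [set e in E :\: C | v \in e] by rewrite inE fE vf.
by rewrite E0 !inE => /eqP -> /eqP ->.
Qed.

Lemma neighbour_of_r x y : pedge (x, y) \in E -> x \in r -> y = v \/ y \in r.
Proof.
move=> xyE xr; have xyC : pedge (x, y) \in C.
  by apply: (edge_at_r_in_cycle xr xyE); rewrite in_pedge eqxx.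
have : y \in v :: r by apply/(cycle_edges_vert xyC); rewrite in_pedge eqxx orbT.
by rewrite inE => /predU1P.
Qed.

Lemma edge_leaving_r x y : (x \in r) != (y \in r) -> pedge (x, y) \in E ->
  v \in pedge (x, y).
Proof.
have leave z t : z \in r -> t \notin r -> pedge (z, t) \in E -> v \in pedge (z, t).
  move=> zr tr ztE; have [<- | tr'] := neighbour_of_r ztE zr; last by rewrite tr' in tr.
  by rewrite in_pedge eqxx orbT.
case: (boolP (x \in r)) => [xr /= yr | xr /= /negPn yr] xyE; first exact: leave.
by rewrite pedgeC in xyE *; apply: leave.
Qed.

Lemma cycle_edgeE x y : pedge (x, y) \in E ->
  (pedge (x, y) \in C) = (x \in r) || (y \in r).
Proof.
move=> xyE; apply/idP/idP => [xyC | /orP[] zr]; last first.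
- by apply: (edge_at_r_in_cycle zr xyE); rewrite in_pedge eqxx orbT.
- by apply: (edge_at_r_in_cycle zr xyE); rewrite in_pedge eqxx.
have : x \in v :: r by apply/(cycle_edges_vert xyC); rewrite in_pedge eqxx.
rewrite inE => /predU1P[xv | ->] //.
have : y \in v :: r by apply/(cycle_edges_vert xyC); rewrite in_pedge eqxx orbT.
rewrite inE => /predU1P[yv | ->]; last by rewrite orbT.
by move: (sE xyE); rewrite xv yv /pedge setUid cards1.
Qed.

Lemma path_edges_drop_r s : is_gpath E s -> path_edges (drop_r s) = path_edges s :\: C.
Proof.
case/and3P=> us _ adj_s.
have adj_sym : symmetric (fun x y => pedge (x, y) \in E) by move=> x y; rewrite pedgeC.
rewrite /path_edges (pairs_filter adj_sym neighbour_of_r) //.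
apply/setP=> e; rewrite inE; apply/imsetP/andP => [[p] | [eC /imsetP[p ps ep]]].
  rewrite mem_filter => /andP[/andP[p1 p2] ps] ->; split; last exact: imset_f.
  case: p ps p1 p2 => x y /= ps.
  by rewrite cycle_edgeE ?(allP adj_s _ ps) // => /negPf-> /negPf->.
exists p => //; rewrite mem_filter ps andbT -negb_or.
move: eC; rewrite ep; case: p ps {ep} => x y ps.
by rewrite cycle_edgeE ?(allP adj_s _ ps).
Qed.

Lemma cycle_edge_path_meets_v s e : is_gpath E s -> 1 < size (drop_r s) ->
  e \in path_edges s -> e \in C ->
  exists f, [/\ f \in path_edges s, f \in E :\: C & v \in f].
Proof.
move=> gs d2 /imsetP[[x y] xys ->]; have /gpathP[_ _ sub] := gs.
have xyE : pedge (x, y) \in E by rewrite (subsetP sub) ?pedge_in_path_edges.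
have [xs ys] := mem_pairs xys.
rewrite cycle_edgeE // => xyr.
have has_r : has (fun z => z \in r) s.
  by case/orP: xyr => zr; apply/hasP; [exists x | exists y].
have has_not_r : has (predC (fun z => z \in r)) s.
  by rewrite has_filter; apply: contraTneq d2 => ->.
have [[a b] abs /= ab] := pairs_mixed has_r has_not_r.
have abE : pedge (a, b) \in E by rewrite (subsetP sub) ?pedge_in_path_edges.
have vs : v \in s.
  exact: path_edges_vert (pedge_in_path_edges abs) (edge_leaving_r ab abE).
have vd : v \in drop_r s by rewrite mem_filter vr.
have [p pd vp] := pairs_cover vd d2.
have := pedge_in_path_edges pd; rewrite path_edges_drop_r // => /setDP[ps pC].
by exists (pedge p); rewrite inE pC (subsetP sub) ?in_pedge.
Qed.

Lemma off_cycle_edge_at_v : exists2 e0, e0 \in E :\: C & v \in e0.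
Proof.
have /eqP/cards1P[e0 E0] := deg_off_cycle_v.
by have := set11 e0; rewrite -E0 inE => /andP[e0E ve0]; exists e0.
Qed.

Lemma path_partition_has_short_drop Q : path_partition E Q ->
  has (fun s => size (drop_r s) <= 1) Q.
Proof.
move=> pQ; have [/allP gQ _ uQ] := pQ.
apply: contraT; rewrite -all_predC => /allP /= long.
have d2 s : s \in Q -> 1 < size (drop_r s) by move/long; rewrite -ltnNge.
have path_of e : e \in C -> exists2 s, s \in Q & e \in path_edges s.
  by move/(subsetP CE); rewrite -uQ => /bigcup_seqP.
have meet s e (sQ : s \in Q) := cycle_edge_path_meets_v (e := e) (gQ s sQ) (d2 s sQ).
have [s0 s0Q es0] := path_of _ closing_edge_in_cycle.
have [f0 [f0s0 f0E vf0]] := meet _ _ s0Q es0 closing_edge_in_cycle.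
have : C \subset path_edges s0.
  apply/subsetP=> e eC'; have [s sQ es] := path_of e eC'.
  have [f [fs fE vf]] := meet _ _ sQ es eC'.
  have ff0 := off_cycle_edge_at_v_unique fE f0E vf vf0.
  by rewrite ff0 in fs; rewrite (path_partition_edge_path pQ s0Q sQ f0s0 fs).
have /gpathP[us0 _ _] := gQ s0 s0Q.
by rewrite (negPf (cycle_edges_not_subset_path uvr c3 us0)).
Qed.

Lemma pn_lower : pn (E :\: C) < pn E.
Proof.
have [Q pQ <-] := pn_exists sE; have [/allP gQ _ _] := pQ.
have pQ' := path_partition_filter pQ (fun s sQ => path_edges_drop_r (gQ s sQ)).
apply: leq_ltn_trans (pn_min pQ') _.
rewrite size_filter -(size_map (filter (fun x => x \notin r)) Q).
rewrite -(count_predC (fun t => 1 < size t)) -[X in X < _]addn0 ltn_add2l.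
rewrite -has_count has_map.
by apply: sub_has (path_partition_has_short_drop pQ) => s /=; rewrite -leqNgt.
Qed.

Lemma gpath_off_cycle_avoids_r s x : is_gpath (E :\: C) s -> x \in s -> x \notin r.
Proof.
move=> gs xs; have [e es xe] := gpath_edge_at gs xs.
have /setDP[eE eC] := subsetP (gpath_sub gs) e es.
by apply: contraNN eC => xr; apply: edge_at_r_in_cycle xr eE xe.
Qed.

Lemma gpath_around_cycle a w : is_gpath (E :\: C) (a :: w) -> last a w = v ->
  is_gpath E ((a :: w) ++ r).
Proof.
move=> gaw awv; apply: gpath_cat; first exact: gpath_subset (subsetDl E C) gaw.
  rewrite awv; apply/gpathP; split; [exact: uvr | exact: ltnW r2 |].
  by apply: subset_trans CE; rewrite cycle_edges_cons subsetUr.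
by apply/hasPn=> x xr; apply: contraL xr; apply: gpath_off_cycle_avoids_r gaw.
Qed.

Lemma gpath_closing_edge : is_gpath E [:: last v r; v].
Proof.
have lr : last v r \in r by case: r r2 => //= x w _; apply: mem_last.
apply/gpathP; rewrite path_edges_cons2 path_edges1 setU0 sub1set; split=> //.
  by rewrite /= inE andbT; apply: contraNneq vr => <-.
exact: subsetP CE _ closing_edge_in_cycle.
Qed.

Lemma pn_upper : pn E <= (pn (E :\: C)).+1.
Proof.
have sE' : simple_edges (E :\: C) by move=> e /setDP[/sE].
have [Q pQ <-] := pn_exists sE'; have [/allP gQ _ uQ] := pQ.
have [e0 e0E ve0] := off_cycle_edge_at_v.
have [s sQ e0s] : exists2 s, s \in Q & e0 \in path_edges s.
  by apply/bigcup_seqP; rewrite uQ.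
have [[|a w] [gaw aws awv]] := gpath_ending_at (gQ s sQ) (path_edges_vert e0s ve0)
  (eq_leq deg_off_cycle_v); first by case/gpathP: gaw.
rewrite /= in awv.
have eb_notin_s : pedge (last v r, v) \notin path_edges s.
  by apply/negP=> /(subsetP (gpath_sub (gQ s sQ))); rewrite inE closing_edge_in_cycle.
have EC : C :|: E :\: C = E by rewrite -{2}(setID E C) (setIidPr CE).
case/splitPr: sQ pQ => Q1 Q2 pQ.
rewrite -EC; apply: leq_trans (pn_min (path_partition_splice pQ _ _ _ _ _)) _.
- by rewrite disjoint_sym disjoints_subset subsetDr.
- by rewrite EC; apply: gpath_around_cycle gaw awv.
- by rewrite EC; apply: gpath_closing_edge.
- rewrite /edge_disjoint path_edges_cat awv path_edges_cons2 path_edges1 setU0.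
  rewrite disjoint_sym disjoints1 in_setU negb_or aws eb_notin_s.
  exact: closing_edge_notin_path_edges.
- rewrite path_edges_cat awv path_edges_cons2 path_edges1 setU0 cycle_edges_cons aws.
  by rewrite [LHS]setUC [path_edges s :|: _]setUC setUA.
by rewrite /= !size_cat /= addnS.
Qed.

End PanCycle.

Theorem lemma5 (T : finType) (E : {set {set T}}) (c : seq T) :
  simple_edges E -> pan_cycle E c ->
  pn E = pn (E :\: cycle_edges c) + 1.
Proof.
move=> sE [/and3P[uc c3 /allP cE] [v [vc dv dc]]].
case/splitPr: vc uc c3 cE dc => p q uc c3 cE dc.
pose r := q ++ p.
have rotE : rot (size p) (p ++ v :: q) = v :: r by rewrite rot_size_cat.
have CE : cycle_edges (p ++ v :: q) = cycle_edges (v :: r).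
  by rewrite -rotE cycle_edges_rot.
have uvr : uniq (v :: r) by rewrite -rotE rot_uniq.
have r2 : 1 < size r by move: c3; rewrite -(size_rot (size p)) rotE.
have CsubE : cycle_edges (v :: r) \subset E.
  by rewrite -CE; apply/subsetP=> _ /imsetP[x /cE xE ->].
have dr x : x \in r -> deg E x = 2.
  move=> xr; apply: dc; first by rewrite -(mem_rot (size p)) rotE inE xr orbT.
  by apply: contraTneq xr => ->; case/andP: uvr.
rewrite CE addn1; apply/eqP; rewrite eqn_leq.
by rewrite (pn_upper sE uvr r2 CsubE dv dr) (pn_lower sE uvr r2 CsubE dv dr).
Qed.
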